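(* For any graph $G$ and integers $k\ge 2$, $r\ge 3$, let $\mathcal{G}=\bigcup_{v\in V(G)}\mathcal{G}^*(v)$. Then $R_r(\mathcal{B}(G),k)\le R(\mathcal{G},k)+r-2$.
   Context: For a graph $G$, a hypergraph $H$ is a Berge-$G$ hypergraph if there are an injective map $\phi:V(G)\to V(H)$ and pairwise distinct hyperedges $e_{xy}\in E(H)$, one for each $xy\in E(G)$, with $\phi(x),\phi(y)\in e_{xy}$. $\mathcal{B}(G)$ denotes the family of all Berge-$G$ hypergraphs. For a family $\mathcal{H}$ of $r$-uniform hypergraphs, $R_r(\mathcal{H},k)$ is the smallest $n$ such that every $k$-coloring of the hyperedges of the complete $r$-uniform hypergraph $K_n^r$ contains a monochromatic subhypergraph belonging to $\mathcal{H}$. For a family $\mathcal{G}$ of graphs, $R(\mathcal{G},k)$ is the smallest $n$ such that every $k$-coloring of the edges of $K_n$ contains a monochromatic subgraph isomorphic to some member of $\mathcal{G}$. For a graph $G$ and $v\in V(G)$ with neighborhood $N(v)=\{q_1,\dots,q_t\}$, let $G'=G-v$. An extension of $G-v$ is any graph obtained from $G'$ by adding, for each $i=1,\dots,t$, an edge $q_ir_i$ not belonging to $G'$, where each $r_i$ is either a vertex of $G'$ or a new vertex not in $G'$ (new vertices may be shared by several $r_i$), and the $t$ added edges are pairwise distinct. $\mathcal{G}^*(v)$ denotes the family of all such extensions. *)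

From mathcomp Require Import all_boot.
Set Implicit Arguments. Unset Strict Implicit. Unset Printing Implicit Defensive.

(* A (finite simple) graph G is given by a vertex finType V (all of V are
   vertices) and an edge set E : {set {set V}} of 2-element subsets. *)
Definition simple_edges (V : finType) (E : {set {set V}}) : Prop :=
  forall e, e \in E -> #|e| = 2.

Definition nbhd (V : finType) (E : {set {set V}}) (v : V) : {set V} :=
  [set q | [set v; q] \in E].

(* Extensions of G - v.  Their vertex type is V + 'I_#|V|: the left summand
   holds the vertices of G' = G - v, the right summand holds the possible new
   vertices (at most t < #|V| new vertices are ever needed).  The choice of
   the r_i is a map rho : V -> V + 'I_#|V| (only its values on N(v) matter). *)
Definition ext_type (V : finType) : finType := (V + 'I_#|V|)%type.

Definition del_edges (V : finType) (E : {set {set V}}) (v : V)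
  : {set {set ext_type V}} :=
  (fun e : {set V} => (@inl V 'I_#|V|) @: e) @: [set e in E | v \notin e].

Definition ext_edge (V : finType) (rho : V -> ext_type V) (q : V)
  : {set ext_type V} := [set (inl q : ext_type V); rho q].

Definition is_extension (V : finType) (E : {set {set V}}) (v : V)
  (rho : V -> ext_type V) : Prop :=
  (forall q, q \in nbhd E v ->
     [/\ rho q != inl q,                      (* q_i r_i is an edge *)
         rho q != inl v &                     (* r_i in V(G') or new *)
         ext_edge rho q \notin del_edges E v])
  /\ {in nbhd E v &, injective (ext_edge rho)}.

Definition ext_vertices (V : finType) (E : {set {set V}}) (v : V)
  (rho : V -> ext_type V) : {set ext_type V} :=
  (@inl V 'I_#|V|) @: [set x | x != v] :|: rho @: nbhd E v.

Definition ext_edges (V : finType) (E : {set {set V}}) (v : V)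
  (rho : V -> ext_type V) : {set {set ext_type V}} :=
  del_edges E v :|: ext_edge rho @: nbhd E v.

(* A k-colouring of the edges of K_N (resp. hyperedges of K_N^r) is a map
   c : {set 'I_N} -> 'I_k; only its values on 2-sets (resp. r-sets) matter. *)

Definition mono_copy (N k : nat) (c : {set 'I_N} -> 'I_k) (i : 'I_k)
  (T : finType) (W : {set T}) (F : {set {set T}}) : Prop :=
  exists f : T -> 'I_N, {in W &, injective f} /\
    forall e, e \in F -> c (f @: e) = i.

Definition ext_ramsey_prop (V : finType) (E : {set {set V}}) (k N : nat)
  : Prop :=
  forall c : {set 'I_N} -> 'I_k,
    exists (i : 'I_k) (v : V) (rho : V -> ext_type V),
      is_extension E v rho /\
      mono_copy c i (ext_vertices E v rho) (ext_edges E v rho).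

Definition mono_berge (V : finType) (E : {set {set V}}) (r N k : nat)
  (c : {set 'I_N} -> 'I_k) (i : 'I_k) : Prop :=
  exists (phi : V -> 'I_N) (h : {set V} -> {set 'I_N}),
    injective phi /\ {in E &, injective h} /\
    forall e, e \in E ->
      [/\ #|h e| = r, c (h e) = i & phi @: e \subset h e].

Definition berge_ramsey_prop (V : finType) (E : {set {set V}}) (r k N : nat)
  : Prop :=
  forall c : {set 'I_N} -> 'I_k, exists i : 'I_k, mono_berge E r c i.

(* Given a k-colouring C of K^r_{N+r-2}, reserve a set S of r - 2 vertices and
   colour each pair A of the remaining N vertices by C(A ∪ S).  Ramsey yields a
   monochromatic extension of G - v.  Send v into S and every other vertex to
   its image in the extension; an edge of G avoiding v becomes its own image
   plus S, while an edge vq becomes the added edge q r_q plus S.  Since S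
   already contains the image of v, this is a monochromatic Berge copy of G
   whose hyperedges are distinct because the added edges are distinct and do
   not lie in G - v. *)
From mathcomp Require Import all_boot.
From mathcomp Require Import zify.

Lemma imset_inj_in {T U : finType} {f : T -> U} {W A B : {set T}} :
  {in W &, injective f} -> A \subset W -> B \subset W ->
  f @: A = f @: B -> A = B.
Proof.
move=> finj sAW sBW eqAB; apply/setP => x.
wlog suff: A B sAW sBW eqAB / x \in A -> x \in B.
  by move=> incl; apply/idP/idP; apply: incl.
move=> xA; have : f x \in f @: B by rewrite -eqAB imset_f.
case/imsetP => y yB /finj; rewrite (subsetP sAW) // (subsetP sBW) //.
by move=> /(_ isT isT) ->.
Qed.

Section Padding.

Variables N m : nat.

Definition pad (A : {set 'I_N}) : {set 'I_(N + m)} :=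
  lshift m @: A :|: [set rshift N j | j : 'I_m].

Lemma mem_pad_lshift A a : (lshift m a \in pad A) = (a \in A).
Proof.
rewrite in_setU mem_imset; last exact: lshift_inj.
by case: imsetP => [[j _ /eqP]|]; rewrite ?eq_lrshift ?orbF.
Qed.

Lemma mem_pad_rshift A j : rshift N j \in pad A.
Proof. by rewrite in_setU imset_f ?orbT. Qed.

Lemma card_pad A : #|pad A| = #|A| + m.
Proof.
rewrite cardsU card_imset; last exact: lshift_inj.
rewrite card_imset; last exact: rshift_inj.
rewrite card_ord (_ : _ :&: _ = set0) ?cards0 ?subn0 //.
apply/setP => a; rewrite !inE; apply/negP.
by case/andP => /imsetP [b _ ->] /imsetP [j _ /eqP]; rewrite eq_lrshift.
Qed.

Lemma pad_inj : injective pad.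
Proof. by move=> A B eqAB; apply/setP => a; rewrite -!mem_pad_lshift eqAB. Qed.

End Padding.

Arguments pad {N} m A.

Section ExtensionImage.

Context {V : finType} {E : {set {set V}}} {v : V} {rho : V -> ext_type V}.
Hypothesis simpleE : simple_edges E.

Definition other_end (e : {set V}) : V := odflt v [pick q in e :\ v].

Lemma other_endP {e : {set V}} : e \in E -> v \in e ->
  [/\ other_end e != v, other_end e \in nbhd E v & e = [set v; other_end e]].
Proof.
move=> eE ve; have card_ev : #|e :\ v| = 1.
  by have := cardsD1 v e; rewrite ve simpleE //; case.
rewrite /other_end; case: pickP => [q /= | /eq_card0]; last by rewrite card_ev.
rewrite in_setD1 => /andP [qv qe].
have eq_e : e = [set v; q].
  apply/eqP; rewrite eq_sym eqEcard cards2 simpleE // eq_sym qv.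
  by rewrite subUset !sub1set ve qe.
by split; rewrite // /nbhd inE -eq_e.
Qed.

Definition ext_image (e : {set V}) : {set ext_type V} :=
  if v \in e then ext_edge rho (other_end e) else inl @: e.

Lemma ext_image_edge {e : {set V}} :
  e \in E -> ext_image e \in ext_edges E v rho.
Proof.
move=> eE; rewrite /ext_image /ext_edges inE; case: ifP => ve.
  by have [_ qN _] := other_endP eE ve; rewrite imset_f ?orbT.
by rewrite /del_edges imset_f // inE eE ve.
Qed.

Lemma ext_image_sub {e : {set V}} :
  e \in E -> ext_image e \subset ext_vertices E v rho.
Proof.
move=> eE; rewrite /ext_image /ext_vertices; case: ifP => ve.
  have [qv qN _] := other_endP eE ve.
  by rewrite subUset !sub1set !inE imset_f ?inE ?(imset_f rho qN) ?orbT.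
apply/subsetP => _ /imsetP [x xe ->]; rewrite inE imset_f // inE.
by apply: contraFneq ve => <-.
Qed.

Hypothesis rho_ext : is_extension E v rho.

Lemma card_ext_image {e : {set V}} : e \in E -> #|ext_image e| = 2.
Proof.
move=> eE; rewrite /ext_image; case: ifP => ve.
  have [_ qN _] := other_endP eE ve; have [rq _ _] := rho_ext.1 _ qN.
  by rewrite cards2 eq_sym rq.
by rewrite card_imset ?simpleE //; move=> ? ? [].
Qed.

Lemma mem_ext_image e x : e \in E -> x \in e -> x != v -> inl x \in ext_image e.
Proof.
move=> eE xe xv; rewrite /ext_image; case: ifP => ve; last exact: imset_f.
have [_ _ eq_e] := other_endP eE ve.
by move: xe; rewrite {1}eq_e !inE (negbTE xv) /= => /eqP ->; rewrite eqxx.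
Qed.

(* An added edge [q r_q] never coincides with the image of an edge avoiding v. *)
Lemma ext_image_inj : {in E &, injective ext_image}.
Proof.
have added_new e1 e2 : e1 \in E -> e2 \in E -> v \in e1 -> v \notin e2 ->
    ext_image e1 != ext_image e2.
  move=> e1E e2E v1 v2; have [_ q1 _] := other_endP e1E v1.
  have [_ _ not_del] := rho_ext.1 _ q1.
  rewrite /ext_image v1 (negbTE v2); apply: contraNneq not_del => ->.
  by rewrite /del_edges imset_f // inE e2E v2.
move=> e1 e2 e1E e2E; case: (boolP (v \in e1)) => v1; case: (boolP (v \in e2)) => v2.
- have [_ q1 eq1] := other_endP e1E v1; have [_ q2 eq2] := other_endP e2E v2.
  by rewrite /ext_image v1 v2 => /(rho_ext.2 _ _ q1 q2) eq_q; rewrite eq1 eq2 eq_q.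
- by move/eqP; rewrite (negbTE (added_new _ _ e1E e2E v1 v2)).
- by move/eqP; rewrite eq_sym (negbTE (added_new _ _ e2E e1E v2 v1)).
- by rewrite /ext_image (negbTE v1) (negbTE v2) => /imset_inj; apply; move=> ? ? [].
Qed.

End ExtensionImage.

Arguments other_end {V} v e.
Arguments ext_image {V} v rho e.

Lemma mono_berge_of_ext_copy (V : finType) (E : {set {set V}}) (r N k : nat)
    (C : {set 'I_(N + (r - 2))} -> 'I_k) (i : 'I_k) (v : V)
    (rho : V -> ext_type V) :
  simple_edges E -> 2 < r -> is_extension E v rho ->
  mono_copy (fun A => C (pad (r - 2) A)) i
    (ext_vertices E v rho) (ext_edges E v rho) ->
  mono_berge E r C i.
Proof.
move=> simpleE r3 rho_ext [f [finj fcol]].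
have m0 : 0 < r - 2 by lia.
pose phi x := if x == v then rshift N (Ordinal m0) else lshift (r - 2) (f (inl x)).
have in_ext x : x != v -> inl x \in ext_vertices E v rho.
  by move=> xv; rewrite !inE imset_f ?inE.
have image_sub e : e \in E -> ext_image v rho e \subset ext_vertices E v rho.
  exact: ext_image_sub.
exists phi, (fun e => pad (r - 2) (f @: ext_image v rho e)); split; [|split].
- move=> x y; rewrite /phi.
  case: (eqVneq x v) => [->|xv]; case: (eqVneq y v) => [->|yv] //.
  + by move/eqP; rewrite eq_rlshift.
  + by move/eqP; rewrite eq_lrshift.
  + by move/lshift_inj/finj; rewrite !in_ext // => /(_ isT isT) [].
- move=> e1 e2 e1E e2E /pad_inj eq_img.
  apply: (ext_image_inj simpleE rho_ext _ _ e1E e2E).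
  exact: imset_inj_in finj (image_sub _ e1E) (image_sub _ e2E) eq_img.
- move=> e eE; split.
  + rewrite card_pad card_in_imset; last first.
      exact: (sub_in2 (subsetP (image_sub _ eE)) finj).
    by rewrite (card_ext_image simpleE rho_ext eE) subnKC // ltnW.
  + exact: (fcol _ (ext_image_edge simpleE eE)).
  + apply/subsetP => _ /imsetP [x xe ->]; rewrite /phi.
    case: (eqVneq x v) => [_|xv]; first exact: mem_pad_rshift.
    by rewrite mem_pad_lshift imset_f // (mem_ext_image simpleE).
Qed.

Theorem corollary2 (V : finType) (E : {set {set V}}) (k r N : nat) :
  simple_edges E -> 2 <= k -> 3 <= r ->
  ext_ramsey_prop E k N ->
  (forall n, n < N -> ~ ext_ramsey_prop E k n) ->
  exists n, n <= N + r - 2 /\ berge_ramsey_prop E r k n.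
Proof.
move=> simpleE _ r3 ramseyN _.
exists (N + (r - 2)); split; first lia.
move=> C; have [i [v [rho [rho_ext copy]]]] := ramseyN (fun A => C (pad (r - 2) A)).
by exists i; apply: mono_berge_of_ext_copy copy.
Qed.
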